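(* Let $X$ be a topological space and $C\subseteq X$. If $C$ is statistically compact, then for every nonthin sequence $(x_n)_{n\in M}$ in $X$ which has no nonthin subsequence statistically convergent in $X$, there exists $N\subseteq M$ with $d(N)=0$ and $x_n\in X\setminus C$ for all $n\in M\setminus N$. Conversely, if $C$ is statistically closed and has this property, then $C$ is statistically compact.
   Context: For $A\subseteq\mathbb{N}$ let $d_n(A)=|A\cap\{1,\dots,n\}|/n$, $\overline{d}(A)=\limsup_n d_n(A)$, $\underline{d}(A)=\liminf_n d_n(A)$, and $d(A)$ their common value when equal. A sequence in $X$ is a map from an infinite subset $M\subseteq\mathbb{N}$ into $X$, written $(x_n)_{n\in M}$; a subsequence is $(x_n)_{n\in N}$ with $N\subseteq M$ infinite. It is nonthin if $\overline{d}(M)>0$. A nonthin sequence $(x_n)_{n\in M}$ is statistically convergent to $a\in X$ if for every open $U\ni a$, $d(\{n\in M:x_n\notin U\})=0$. The statistical closure $\overline{F}^{ST}$ of $F\subseteq X$ is the set of $x\in X$ such that some nonthin sequence in $F$ is statistically convergent to $x$; $F$ is statistically closed if $\overline{F}^{ST}=F$. A topological space is statistically compact if every nonthin sequence in it has a nonthin subsequence that is statistically convergent to some point of the space; a subset is statistically compact if it is so in the subspace topology. *)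

From HB Require Import structures.
From mathcomp Require Import all_boot all_order all_algebra.
From mathcomp Require Import all_classical all_reals all_analysis.
From mathcomp Require Import Rstruct Rstruct_topology.
From Stdlib Require Import Rdefinitions.
Set Implicit Arguments. Unset Strict Implicit. Unset Printing Implicit Defensive.
Import Order.TTheory GRing.Theory Num.Theory.
Local Open Scope classical_set_scope.
Local Open Scope ring_scope.

Definition dn (A : set nat) (n : nat) : Rdefinitions.R :=
  (\sum_(1 <= k < n.+1) (\1_A k : Rdefinitions.R)) / n%:R.

Definition upper_density (A : set nat) : \bar Rdefinitions.R :=
  limn_esup (fun n => (dn A n)%:E).

Definition density_zero (A : set nat) : Prop := dn A @ \oo --> (0 : Rdefinitions.R).

Definition nonthin (M : set nat) : Prop := (0 < upper_density M)%E.

Definition stat_conv_wrt {X : Type} (opens : set (set X))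
    (M : set nat) (x : nat -> X) (a : X) : Prop :=
  nonthin M /\
  forall U, opens U -> U a -> density_zero [set n | M n /\ ~ U (x n)].

Definition stat_conv {X : topologicalType} (M : set nat) (x : nat -> X) (a : X) :=
  stat_conv_wrt open M x a.

Definition subseq_idx (N M : set nat) : Prop := N `<=` M /\ infinite_set N.

Definition subspace_opens {X : topologicalType} (C : set X) : set (set X) :=
  [set U | exists V, open V /\ U = V `&` C].

Definition stat_compact_set {X : topologicalType} (C : set X) : Prop :=
  forall (M : set nat) (x : nat -> X),
    infinite_set M -> (forall n, M n -> C (x n)) -> nonthin M ->
    exists N, subseq_idx N M /\ nonthin N /\
      exists a, C a /\ stat_conv_wrt (subspace_opens C) N x a.

Definition stat_closure {X : topologicalType} (F : set X) : set X :=
  [set a | exists (M : set nat) (x : nat -> X),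
     infinite_set M /\ (forall n, M n -> F (x n)) /\ nonthin M /\ stat_conv M x a].

Definition stat_closed {X : topologicalType} (F : set X) : Prop :=
  stat_closure F = F.

Definition escape_property {X : topologicalType} (C : set X) : Prop :=
  forall (M : set nat) (x : nat -> X),
    infinite_set M -> nonthin M ->
    ~ (exists N, subseq_idx N M /\ nonthin N /\ exists a, stat_conv N x a) ->
    exists N, N `<=` M /\ density_zero N /\
      forall n, M n -> ~ N n -> ~ C (x n).

(* If C is statistically compact and (x_n)_{n in M} has no statistically
   convergent nonthin subsequence, the indices n with x_n in C form a set of
   density zero: otherwise it is nonthin, and a statistically convergent
   nonthin subsequence in C would also converge in X, since for indices landing
   in C the open sets V and V ∩ C exclude the same terms.  Conversely, a nonthin
   sequence in C either has a nonthin subsequence converging in X, whose limit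
   lies in C because C is statistically closed, or the escape property makes
   the whole index set M, all of whose terms lie in C, of density zero, which
   contradicts nonthinness. *)
From HB Require Import structures.
From mathcomp Require Import all_boot all_order all_algebra.
From mathcomp Require Import all_classical all_reals all_analysis.
From mathcomp Require Import Rstruct Rstruct_topology.
Set Implicit Arguments. Unset Strict Implicit.
Import Order.TTheory GRing.Theory Num.Theory.
Local Open Scope classical_set_scope.
Local Open Scope ring_scope.

Lemma dn_ge0 A n : 0 <= dn A n.
Proof. by rewrite /dn divr_ge0 // sumr_ge0 // => k _; rewrite indicE. Qed.

Lemma density_zero_upper_density A : density_zero A -> upper_density A = 0%E.
Proof.
move=> A0; have : (fun n => (dn A n)%:E) @ \oo --> (0 : Rdefinitions.R)%:E.
  by apply: cvg_EFin; [exact: nearW | exact: A0].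
by move=> /cvg_limn_einf_sup [].
Qed.

Lemma upper_density_le0 A : (upper_density A <= 0)%E -> density_zero A.
Proof.
move=> A0; have : (fun n => (dn A n)%:E) @ \oo --> (0 : Rdefinitions.R)%:E.
  by apply: limn_esup_le_cvg => // n; rewrite lee_fin dn_ge0.
by move=> /fine_cvgP [].
Qed.

Lemma nonthinP A : nonthin A <-> ~ density_zero A.
Proof.
split; first by move=> + /density_zero_upper_density A0; rewrite /nonthin A0 ltxx.
by move=> A0; rewrite /nonthin ltNge; apply/negP => /upper_density_le0.
Qed.

Lemma bounded_density_zero A K : (forall k, A k -> (k < K)%N) -> density_zero A.
Proof.
move=> AK; pose c : Rdefinitions.R := \sum_(1 <= k < K.+1) (\1_A k : Rdefinitions.R).
have dnE : \forall n \near \oo, c / n%:R = dn A n.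
  near=> n; apply/esym; rewrite /dn /c (@big_cat_nat _ _ _ K.+1 1 n.+1) //=; last first.
    by rewrite ltnS; near: n; exists K.
  rewrite [X in _ + X]big_nat_cond [X in _ + X]big1 ?addr0 // => k.
  by move=> /andP[/andP[Kk _] _]; rewrite indicE memNset // => /AK; rewrite ltnNge ltnW.
apply: cvg_trans (near_eq_cvg dnE) _; rewrite -cvg_shiftS /=.
have := cvgMl_tmp (a := c) (@cvg_harmonic Rdefinitions.R).
by rewrite mulr0; apply.
Unshelve. all: by end_near.
Qed.

Lemma finite_set_density_zero (A : set nat) : finite_set A -> density_zero A.
Proof.
move=> finA.
apply: (@bounded_density_zero _ (\max_(i <- finmap.enum_fset (fset_set A)) i).+1) => k Ak.
rewrite ltnS; apply: (@leq_bigmax_seq _ _ xpredT id) => //.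
by rewrite in_fset_set // mem_set.
Qed.

Lemma nonthin_infinite_set A : nonthin A -> infinite_set A.
Proof. by move=> /nonthinP + /finite_set_density_zero. Qed.

Lemma stat_conv_subspace (X : topologicalType) (C : set X) N (x : nat -> X) a :
  (forall n, N n -> C (x n)) -> C a ->
  stat_conv_wrt (subspace_opens C) N x a <-> stat_conv N x a.
Proof.
move=> NC Ca.
have excludedE V : [set n | N n /\ ~ (V `&` C) (x n)] = [set n | N n /\ ~ V (x n)].
  apply/seteqP; split=> n [Nn nVx]; split=> //.
    by move=> Vx; apply: nVx; split=> //; exact: NC.
  by move=> [/nVx].
split=> -[Nnt conv]; split=> // U.
  move=> oU Ua; rewrite -excludedE; apply: conv; first by exists U.
  by split.
by move=> [V [oV ->]] [Va _]; rewrite excludedE; exact: conv.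
Qed.

Lemma stat_compact_escape (X : topologicalType) (C : set X) :
  stat_compact_set C -> escape_property C.
Proof.
move=> cptC M x _ _ noconv; exists [set n | M n /\ C (x n)].
split; first by move=> n [].
split; last by move=> n Mn + Cx; apply.
apply: contrapT => /nonthinP MCnt.
have [N [[NMC Ninf] [Nnt [a [Ca conv]]]]] :=
  cptC _ x (nonthin_infinite_set MCnt) (fun n => @proj2 _ _) MCnt.
have NC n : N n -> C (x n) by move=> /NMC [].
apply: noconv; exists N; split; first by split=> // n /NMC [].
by split=> //; exists a; apply/(stat_conv_subspace NC Ca).
Qed.

Lemma stat_closed_escape_stat_compact (X : topologicalType) (C : set X) :
  stat_closed C -> escape_property C -> stat_compact_set C.
Proof.
move=> closedC escC M x Minf MC Mnt.
have [[N [[NM Ninf] [Nnt [a conv]]]]|noconv] :=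
  pselect (exists N, subseq_idx N M /\ nonthin N /\ exists a, stat_conv N x a).
  have NC n : N n -> C (x n) by move=> /NM /MC.
  have Ca : C a by rewrite -closedC; exists N, x.
  exists N; split=> //; split=> //; exists a; split=> //.
  exact/(stat_conv_subspace NC Ca).
have [N [NM [N0 escN]]] := escC M x Minf Mnt noconv.
suff MN : M = N by move/nonthinP: Mnt; rewrite MN.
apply/seteqP; split=> // n Mn; apply: contrapT => Nn; exact: escN n Mn Nn (MC n Mn).
Qed.

Theorem mainTheorem16 (X : topologicalType) (C : set X) :
  (stat_compact_set C -> escape_property C) /\
  (stat_closed C -> escape_property C -> stat_compact_set C).
Proof.
split; [exact: stat_compact_escape | exact: stat_closed_escape_stat_compact].
Qed.
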